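(* Let $\mathbf r:[L_1,L_2]\to\mathbb R^4$ be an arc-length parametrized curve with Frenet frame $\{\mathbf T,\mathbf N,\mathbf B_1,\mathbf B_2\}$ and curvatures $k_1,k_2,k_3$ (with $k_1>0$), and let $$\mathbf P(s,t,q)=\mathbf r(s)+u(s,t,q)\mathbf T(s)+v(s,t,q)\mathbf N(s)+w(s,t,q)\mathbf B_1(s)+x(s,t,q)\mathbf B_2(s),$$ $(s,t,q)\in[L_1,L_2]\times[T_1,T_2]\times[Q_1,Q_2]$, with $C^1$ marching-scale functions $u,v,w,x$. Fix $t_0\in[T_1,T_2]$, $q_0\in[Q_1,Q_2]$. Then $\mathbf r$ is an isogeodesic of $\mathbf P$ at $(t_0,q_0)$ (i.e. $\mathbf P(s,t_0,q_0)=\mathbf r(s)$ for all $s$, $\mathbf P$ is regular along $\mathbf r$, and $\mathbf r$ is a geodesic of $\mathbf P$) if and only if for all $s\in[L_1,L_2]$: (i) $u(s,t_0,q_0)=v(s,t_0,q_0)=w(s,t_0,q_0)=x(s,t_0,q_0)=0$; (ii) $\frac{\partial v}{\partial t}\frac{\partial x}{\partial q}-\frac{\partial v}{\partial q}\frac{\partial x}{\partial t}=0$ and $\frac{\partial v}{\partial t}\frac{\partial w}{\partial q}-\frac{\partial v}{\partial q}\frac{\partial w}{\partial t}=0$ at $(s,t_0,q_0)$; (iii) $\frac{\partial w}{\partial t}\frac{\partial x}{\partial q}-\frac{\partial w}{\partial q}\frac{\partial x}{\partial t}\neq 0$ at $(s,t_0,q_0)$. Moreover, given (i) and (iii), condition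 (ii) is equivalent to $\frac{\partial v}{\partial t}(s,t_0,q_0)=\frac{\partial v}{\partial q}(s,t_0,q_0)=0$.
   Context: The Frenet frame of an arc-length curve $\mathbf r$ in $\mathbb R^4$ (assumed smooth enough with $k_1,k_2$ nonvanishing so that the frame is defined) satisfies $\mathbf T=\mathbf r'$, $\mathbf T'=k_1\mathbf N$, $\mathbf N'=-k_1\mathbf T+k_2\mathbf B_1$, $\mathbf B_1'=-k_2\mathbf N+k_3\mathbf B_2$, $\mathbf B_2'=-k_3\mathbf B_1$, and is orthonormal. A hypersurface $\mathbf P(s,t,q)$ is regular at a point if $\partial_s\mathbf P,\partial_t\mathbf P,\partial_q\mathbf P$ are linearly independent there; its normal is the four-dimensional vector product $\partial_s\mathbf P\otimes\partial_t\mathbf P\otimes\partial_q\mathbf P$ (formal determinant with first row $\mathbf e_1,\dots,\mathbf e_4$ and the three vectors' coordinates as remaining rows). A curve $\mathbf r$ lying on $\mathbf P$ with $k_1>0$ is a geodesic of $\mathbf P$ iff its principal normal $\mathbf N$ is parallel to the normal of $\mathbf P$ along the curve. A curve is an isoparametric curve of $\mathbf P$ if $\mathbf r(s)=\mathbf P(s,t_0,q_0)$ for some fixed $t_0,q_0$; an isogeodesic is a curve that is both a geodesic and an isoparametric curve. *)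

From Stdlib Require Export Reals.
Open Scope R_scope.

Record vec4 := V4 { c1 : R; c2 : R; c3 : R; c4 : R }.

Definition vzero : vec4 := V4 0 0 0 0.
Definition vadd (a b : vec4) : vec4 :=
  V4 (c1 a + c1 b) (c2 a + c2 b) (c3 a + c3 b) (c4 a + c4 b).
Definition vscale (k : R) (a : vec4) : vec4 :=
  V4 (k * c1 a) (k * c2 a) (k * c3 a) (k * c4 a).
Definition vdot (a b : vec4) : R :=
  c1 a * c1 b + c2 a * c2 b + c3 a * c3 b + c4 a * c4 b.

Definition vderiv (f : R -> vec4) (x : R) (l : vec4) : Prop :=
  derivable_pt_lim (fun y => c1 (f y)) x (c1 l) /\
  derivable_pt_lim (fun y => c2 (f y)) x (c2 l) /\
  derivable_pt_lim (fun y => c3 (f y)) x (c3 l) /\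
  derivable_pt_lim (fun y => c4 (f y)) x (c4 l).

Definition det3 (a1 a2 a3 b1 b2 b3 d1 d2 d3 : R) : R :=
  a1 * (b2 * d3 - b3 * d2) - a2 * (b1 * d3 - b3 * d1) + a3 * (b1 * d2 - b2 * d1).

(* four-dimensional vector product a (x) b (x) c : formal 4x4 determinant with
   first row e1..e4, expanded along the first row *)
Definition cross4 (a b d : vec4) : vec4 :=
  V4 (det3 (c2 a) (c3 a) (c4 a) (c2 b) (c3 b) (c4 b) (c2 d) (c3 d) (c4 d))
     (- det3 (c1 a) (c3 a) (c4 a) (c1 b) (c3 b) (c4 b) (c1 d) (c3 d) (c4 d))
     (det3 (c1 a) (c2 a) (c4 a) (c1 b) (c2 b) (c4 b) (c1 d) (c2 d) (c4 d))
     (- det3 (c1 a) (c2 a) (c3 a) (c1 b) (c2 b) (c3 b) (c1 d) (c2 d) (c3 d)).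

Definition lin_indep3 (a b d : vec4) : Prop :=
  forall x y z : R,
    vadd (vscale x a) (vadd (vscale y b) (vscale z d)) = vzero ->
    x = 0 /\ y = 0 /\ z = 0.

Definition parallel (a b : vec4) : Prop :=
  exists x y : R, (x <> 0 \/ y <> 0) /\ vadd (vscale x a) (vscale y b) = vzero.

(* Frenet frame of an arc-length curve on [L1,L2] (functions given on all of R,
   equations required at the points of [L1,L2]) *)
Definition frenet_frame (r T N B1 B2 : R -> vec4) (k1 k2 k3 : R -> R)
  (L1 L2 : R) : Prop :=
  forall s, L1 <= s <= L2 ->
    vderiv r s (T s) /\
    vderiv T s (vscale (k1 s) (N s)) /\
    vderiv N s (vadd (vscale (- k1 s) (T s)) (vscale (k2 s) (B1 s))) /\
    vderiv B1 s (vadd (vscale (- k2 s) (N s)) (vscale (k3 s) (B2 s))) /\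
    vderiv B2 s (vscale (- k3 s) (B1 s)) /\
    vdot (T s) (T s) = 1 /\ vdot (N s) (N s) = 1 /\
    vdot (B1 s) (B1 s) = 1 /\ vdot (B2 s) (B2 s) = 1 /\
    vdot (T s) (N s) = 0 /\ vdot (T s) (B1 s) = 0 /\ vdot (T s) (B2 s) = 0 /\
    vdot (N s) (B1 s) = 0 /\ vdot (N s) (B2 s) = 0 /\ vdot (B1 s) (B2 s) = 0 /\
    0 < k1 s /\ k2 s <> 0.

Definition cont3 (f : R -> R -> R -> R) : Prop :=
  forall s t q eps, 0 < eps -> exists d, 0 < d /\
    forall s' t' q', Rabs (s' - s) < d -> Rabs (t' - t) < d -> Rabs (q' - q) < d ->
      Rabs (f s' t' q' - f s t q) < eps.

Definition C1_with (f fs ft fq : R -> R -> R -> R) : Prop :=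
  (forall s t q,
     derivable_pt_lim (fun s' => f s' t q) s (fs s t q) /\
     derivable_pt_lim (fun t' => f s t' q) t (ft s t q) /\
     derivable_pt_lim (fun q' => f s t q') q (fq s t q)) /\
  cont3 fs /\ cont3 ft /\ cont3 fq.

Definition hyper (r T N B1 B2 : R -> vec4) (u v w x : R -> R -> R -> R)
  (s t q : R) : vec4 :=
  vadd (r s) (vadd (vscale (u s t q) (T s)) (vadd (vscale (v s t q) (N s))
    (vadd (vscale (w s t q) (B1 s)) (vscale (x s t q) (B2 s))))).

Definition partials (P : R -> R -> R -> vec4) (s t q : R) (Ps Pt Pq : vec4) : Prop :=
  vderiv (fun s' => P s' t q) s Ps /\
  vderiv (fun t' => P s t' q) t Pt /\
  vderiv (fun q' => P s t q') q Pq.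

Definition regular_at (P : R -> R -> R -> vec4) (s t q : R) : Prop :=
  exists Ps Pt Pq, partials P s t q Ps Pt Pq /\ lin_indep3 Ps Pt Pq.

Definition normal_at (P : R -> R -> R -> vec4) (s t q : R) (n : vec4) : Prop :=
  exists Ps Pt Pq, partials P s t q Ps Pt Pq /\ n = cross4 Ps Pt Pq.

(* r is an isogeodesic of P at (t0,q0) on [L1,L2]: isoparametric, P regular
   along r, and the principal normal N of r parallel to the normal of P *)
Definition isogeodesic (P : R -> R -> R -> vec4) (r N : R -> vec4)
  (L1 L2 t0 q0 : R) : Prop :=
  forall s, L1 <= s <= L2 ->
    P s t0 q0 = r s /\ regular_at P s t0 q0 /\
    exists n, normal_at P s t0 q0 n /\ parallel (N s) n.

From Stdlib Require Import Reals Lra.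
Open Scope R_scope.

(* Along the curve, with (t,q) = (t0,q0), write P = r + u T + v N + w B1 + x B2.
   (1) P(s,t0,q0) = r(s) means exactly that u,v,w,x vanish there, since the
       Frenet frame is orthonormal (coordinates are read off by dot products).
   (2) Once u,v,w,x vanish on the whole interval their s-derivatives vanish
       too, so the partial derivatives of P along the curve are
       P_s = T,  P_t = u_t T + v_t N + w_t B1 + x_t B2,  P_q likewise.
   (3) A pure linear-algebra statement about an orthonormal frame of R^4:
       T, P_t, P_q are independent and N is parallel to T (x) P_t (x) P_q iff
       the 2x2 minors (ii) vanish and the minor (iii) does not.  The normal
       T (x) P_t (x) P_q has frame coordinates given by these minors times the
       frame determinant, which is +-1 because the frame is orthonormal. *)

Lemma vec4_ext (a b : vec4) :
  c1 a = c1 b -> c2 a = c2 b -> c3 a = c3 b -> c4 a = c4 b -> a = b.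
Proof. destruct a, b; simpl; intros; subst; reflexivity. Qed.

Lemma vdot_add_l (a b d : vec4) : vdot (vadd a b) d = vdot a d + vdot b d.
Proof. unfold vdot; simpl; ring. Qed.

Lemma vdot_scale_l (k : R) (a d : vec4) : vdot (vscale k a) d = k * vdot a d.
Proof. unfold vdot; simpl; ring. Qed.

Lemma vdot_sym (a b : vec4) : vdot a b = vdot b a.
Proof. unfold vdot; ring. Qed.

Lemma vadd_cancel_l (p c : vec4) : vadd p c = p -> c = vzero.
Proof.
  destruct p, c; unfold vadd; intros E; injection E; intros.
  apply vec4_ext; simpl; lra.
Qed.

Definition frame_comb (T N B1 B2 : vec4) (a b c d : R) : vec4 :=
  vadd (vscale a T) (vadd (vscale b N) (vadd (vscale c B1) (vscale d B2))).

Definition orthonormal (T N B1 B2 : vec4) : Prop :=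
  vdot T T = 1 /\ vdot N N = 1 /\ vdot B1 B1 = 1 /\ vdot B2 B2 = 1 /\
  vdot T N = 0 /\ vdot T B1 = 0 /\ vdot T B2 = 0 /\
  vdot N B1 = 0 /\ vdot N B2 = 0 /\ vdot B1 B2 = 0.

Definition det4 (a b c d : vec4) : R := vdot (cross4 a b c) d.

Lemma vdot_frame_comb (T N B1 B2 E : vec4) (a b c d : R) :
  vdot (frame_comb T N B1 B2 a b c d) E =
  a * vdot T E + b * vdot N E + c * vdot B1 E + d * vdot B2 E.
Proof. unfold frame_comb; rewrite !vdot_add_l, !vdot_scale_l; ring. Qed.

Lemma frame_coords (T N B1 B2 : vec4) (a b c d : R) :
  orthonormal T N B1 B2 ->
  vdot (frame_comb T N B1 B2 a b c d) T = a /\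
  vdot (frame_comb T N B1 B2 a b c d) N = b /\
  vdot (frame_comb T N B1 B2 a b c d) B1 = c /\
  vdot (frame_comb T N B1 B2 a b c d) B2 = d.
Proof.
  intros (tt & nn & bb1 & bb2 & tn & tb1 & tb2 & nb1 & nb2 & b12).
  rewrite !vdot_frame_comb, (vdot_sym N T), (vdot_sym B1 T), (vdot_sym B2 T),
    (vdot_sym B1 N), (vdot_sym B2 N), (vdot_sym B2 B1).
  rewrite tt, nn, bb1, bb2, tn, tb1, tb2, nb1, nb2, b12.
  repeat split; ring.
Qed.

Lemma frame_comb_eq0 (T N B1 B2 : vec4) (a b c d : R) :
  orthonormal T N B1 B2 -> frame_comb T N B1 B2 a b c d = vzero ->
  a = 0 /\ b = 0 /\ c = 0 /\ d = 0.
Proof.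
  intros Ho E. destruct (frame_coords T N B1 B2 a b c d Ho) as (hT & hN & hB1 & hB2).
  rewrite E in hT, hN, hB1, hB2. unfold vdot in *; simpl in *. lra.
Qed.

Lemma cross4_norm_gram (a b c : vec4) :
  vdot (cross4 a b c) (cross4 a b c) =
  det3 (vdot a a) (vdot a b) (vdot a c) (vdot b a) (vdot b b) (vdot b c)
       (vdot c a) (vdot c b) (vdot c c).
Proof. unfold vdot, cross4, det3; simpl; ring. Qed.

(* The dual basis of (a, b, c, d) is given by vector products; this is the
   adjugate formula  det(a,b,c,d) z = sum_i <z, e_i> e_i^*. *)
Lemma det4_dual_expansion (a b c d z : vec4) :
  vscale (det4 a b c d) z =
  vadd (vscale (- vdot z a) (cross4 b c d))
   (vadd (vscale (vdot z b) (cross4 a c d))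
    (vadd (vscale (- vdot z c) (cross4 a b d)) (vscale (vdot z d) (cross4 a b c)))).
Proof. unfold det4; apply vec4_ext; unfold vdot, cross4, det3; simpl; ring. Qed.

Lemma orthonormal_det4_sq (T N B1 B2 : vec4) :
  orthonormal T N B1 B2 -> det4 T N B1 B2 * det4 T N B1 B2 = 1.
Proof.
  intros Ho. pose proof Ho as (tt & nn & bb1 & bb2 & tn & tb1 & tb2 & nb1 & nb2 & b12).
  assert (HB2 : vscale (det4 T N B1 B2) B2 = cross4 T N B1).
  { rewrite det4_dual_expansion, (vdot_sym B2 T), (vdot_sym B2 N), (vdot_sym B2 B1).
    rewrite tb2, nb2, b12, bb2. apply vec4_ext; simpl; ring. }
  assert (Hnorm := cross4_norm_gram T N B1).
  rewrite <- HB2, vdot_scale_l, (vdot_sym B2), vdot_scale_l, bb2 in Hnorm.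
  rewrite (vdot_sym N T), (vdot_sym B1 T), (vdot_sym B1 N) in Hnorm.
  rewrite tt, nn, bb1, tn, tb1, nb1 in Hnorm. unfold det3 in Hnorm. lra.
Qed.

Lemma orthonormal_det4_neq0 (T N B1 B2 : vec4) :
  orthonormal T N B1 B2 -> det4 T N B1 B2 <> 0.
Proof.
  intros Ho E. pose proof (orthonormal_det4_sq T N B1 B2 Ho) as H.
  rewrite E in H. lra.
Qed.

Lemma orthogonal_to_frame (T N B1 B2 z : vec4) :
  orthonormal T N B1 B2 ->
  vdot z T = 0 -> vdot z N = 0 -> vdot z B1 = 0 -> vdot z B2 = 0 -> z = vzero.
Proof.
  intros Ho hT hN hB1 hB2.
  assert (HD := orthonormal_det4_neq0 T N B1 B2 Ho).
  assert (Hz : vscale (det4 T N B1 B2) z = vzero).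
  { rewrite det4_dual_expansion, hT, hN, hB1, hB2. apply vec4_ext; simpl; ring. }
  apply vec4_ext; simpl;
    [ apply (f_equal c1) in Hz | apply (f_equal c2) in Hz
    | apply (f_equal c3) in Hz | apply (f_equal c4) in Hz ];
    simpl in Hz; destruct (Rmult_integral _ _ Hz); tauto.
Qed.

Lemma parallel_frame_iff (T N B1 B2 n : vec4) :
  orthonormal T N B1 B2 -> vdot n T = 0 ->
  (parallel N n <-> vdot n B1 = 0 /\ vdot n B2 = 0).
Proof.
  intros Ho hT. pose proof Ho as (tt & nn & bb1 & bb2 & tn & tb1 & tb2 & nb1 & nb2 & b12).
  split.
  - intros (a & b & Hab & E).
    assert (dot_E : forall Z, a * vdot N Z + b * vdot n Z = 0).
    { intros Z. rewrite <- !vdot_scale_l, <- vdot_add_l, E. unfold vdot; simpl; ring. }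
    assert (hN := dot_E N). assert (hB1 := dot_E B1). assert (hB2 := dot_E B2).
    rewrite nn in hN. rewrite nb1 in hB1. rewrite nb2 in hB2.
    assert (Hb : b <> 0) by (intro; subst b; destruct Hab; lra).
    split; apply (Rmult_eq_reg_l b); lra.
  - intros [hB1 hB2]. exists (vdot n N), (-1). split; [right; lra|].
    apply (orthogonal_to_frame T N B1 B2); trivial;
      rewrite vdot_add_l, !vdot_scale_l, ?(vdot_sym N T), ?tn, ?nn, ?nb1, ?nb2,
        ?hT, ?hB1, ?hB2; ring.
Qed.

Section NormalCoordinates.
Variables (T N B1 B2 : vec4) (ut vt wt xt uq vq wq xq : R).
Let Pt := frame_comb T N B1 B2 ut vt wt xt.
Let Pq := frame_comb T N B1 B2 uq vq wq xq.

Lemma normal_coord_T : vdot (cross4 T Pt Pq) T = 0.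
Proof. unfold Pt, Pq, frame_comb, vdot, cross4, det3; simpl; ring. Qed.

Lemma normal_coord_B1 :
  vdot (cross4 T Pt Pq) B1 = - (vt * xq - vq * xt) * det4 T N B1 B2.
Proof. unfold Pt, Pq, det4, frame_comb, vdot, cross4, det3; simpl; ring. Qed.

Lemma normal_coord_B2 :
  vdot (cross4 T Pt Pq) B2 = (vt * wq - vq * wt) * det4 T N B1 B2.
Proof. unfold Pt, Pq, det4, frame_comb, vdot, cross4, det3; simpl; ring. Qed.
End NormalCoordinates.

Lemma det2_kernel (a b c d y z : R) :
  a * d - b * c <> 0 -> a * y + b * z = 0 -> c * y + d * z = 0 -> y = 0 /\ z = 0.
Proof.
  intros HD h1 h2.
  assert (hy : y * (a * d - b * c) = 0) by
    (replace (y * (a * d - b * c)) with (d * (a * y + b * z) - b * (c * y + d * z)) by ring;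
     rewrite h1, h2; ring).
  assert (hz : z * (a * d - b * c) = 0) by
    (replace (z * (a * d - b * c)) with (a * (c * y + d * z) - c * (a * y + b * z)) by ring;
     rewrite h1, h2; ring).
  destruct (Rmult_integral _ _ hy), (Rmult_integral _ _ hz); tauto.
Qed.

Definition independent_columns (a b c d e f : R) : Prop :=
  forall be ga, be * a + ga * b = 0 -> be * c + ga * d = 0 -> be * e + ga * f = 0 ->
    be = 0 /\ ga = 0.

Lemma independent_columns_iff_minor (a b c d e f : R) :
  a * f - b * e = 0 -> a * d - b * c = 0 ->
  (independent_columns a b c d e f <-> c * f - d * e <> 0).
Proof.
  intros m1 m2. split.
  - intros Hind m3.
    (* all minors vanish: exhibit a nonzero kernel vector *)
    destruct (Req_dec a 0) as [ha|ha];
      [destruct (Req_dec c 0) as [hc|hc]; [destruct (Req_dec e 0) as [he|he]|]|].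
    + subst a c e. destruct (Hind 1 0); lra.
    + subst a c. destruct (Hind f (- e)); lra.
    + subst a. destruct (Hind d (- c)); lra.
    + destruct (Hind b (- a)); lra.
  - intros m3 be ga _ h2 h3. apply (det2_kernel c d e f); lra.
Qed.

Lemma minors_vanish_iff (vt vq wt wq xt xq : R) :
  wt * xq - wq * xt <> 0 ->
  ((vt * xq - vq * xt = 0 /\ vt * wq - vq * wt = 0) <-> (vt = 0 /\ vq = 0)).
Proof.
  intros HD. split.
  - intros [h1 h2]. apply (det2_kernel xq (- xt) wq (- wt)); lra.
  - intros [-> ->]. split; ring.
Qed.

Lemma lin_indep3_frame_iff (T N B1 B2 : vec4) (ut vt wt xt uq vq wq xq : R) :
  orthonormal T N B1 B2 ->
  (lin_indep3 T (frame_comb T N B1 B2 ut vt wt xt) (frame_comb T N B1 B2 uq vq wq xq)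
   <-> independent_columns vt vq wt wq xt xq).
Proof.
  intros Ho.
  assert (Hlin : forall al be ga,
    vadd (vscale al T) (vadd (vscale be (frame_comb T N B1 B2 ut vt wt xt))
                             (vscale ga (frame_comb T N B1 B2 uq vq wq xq))) =
    frame_comb T N B1 B2 (al + be * ut + ga * uq) (be * vt + ga * vq)
                         (be * wt + ga * wq) (be * xt + ga * xq)).
  { intros. apply vec4_ext; unfold frame_comb; simpl; ring. }
  split.
  - intros Hind be ga h1 h2 h3.
    destruct (Hind (- (be * ut + ga * uq)) be ga) as (_ & ? & ?); [|auto].
    rewrite Hlin, h1, h2, h3. apply vec4_ext; unfold frame_comb; simpl; ring.
  - intros Hcols al be ga E. rewrite Hlin in E.
    destruct (frame_comb_eq0 _ _ _ _ _ _ _ _ Ho E) as (h0 & h1 & h2 & h3).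
    destruct (Hcols be ga h1 h2 h3) as [-> ->]. repeat split; lra.
Qed.

Lemma frame_geodesic_iff (T N B1 B2 : vec4) (ut vt wt xt uq vq wq xq : R) :
  orthonormal T N B1 B2 ->
  (lin_indep3 T (frame_comb T N B1 B2 ut vt wt xt) (frame_comb T N B1 B2 uq vq wq xq) /\
   parallel N (cross4 T (frame_comb T N B1 B2 ut vt wt xt) (frame_comb T N B1 B2 uq vq wq xq))
   <-> (vt * xq - vq * xt = 0 /\ vt * wq - vq * wt = 0) /\ wt * xq - wq * xt <> 0).
Proof.
  intros Ho.
  assert (HD := orthonormal_det4_neq0 T N B1 B2 Ho).
  rewrite (lin_indep3_frame_iff _ _ _ _ _ _ _ _ _ _ _ _ Ho),
    (parallel_frame_iff _ _ _ _ _ Ho (normal_coord_T _ _ _ _ _ _ _ _ _ _ _ _)),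
    normal_coord_B1, normal_coord_B2.
  assert (Hpar : (- (vt * xq - vq * xt) * det4 T N B1 B2 = 0 /\
                  (vt * wq - vq * wt) * det4 T N B1 B2 = 0) <->
                 (vt * xq - vq * xt = 0 /\ vt * wq - vq * wt = 0)).
  { split.
    - intros [h1 h2].
      destruct (Rmult_integral _ _ h1), (Rmult_integral _ _ h2); split; tauto || lra.
    - intros [-> ->]. split; ring. }
  rewrite Hpar. split.
  - intros [Hcols Hii]. split; trivial.
    apply (independent_columns_iff_minor vt vq); tauto.
  - intros [Hii Hiii]. split; trivial.
    apply independent_columns_iff_minor; tauto.
Qed.

Lemma vderiv_ext (f : R -> vec4) (y : R) (l l' : vec4) :
  l = l' -> vderiv f y l -> vderiv f y l'.
Proof. intros <-; trivial. Qed.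

Lemma vderiv_const (p : vec4) (y : R) : vderiv (fun _ => p) y vzero.
Proof. repeat split; apply derivable_pt_lim_const. Qed.

Lemma vderiv_add (f g : R -> vec4) (y : R) (a b : vec4) :
  vderiv f y a -> vderiv g y b -> vderiv (fun z => vadd (f z) (g z)) y (vadd a b).
Proof.
  intros (f1 & f2 & f3 & f4) (g1 & g2 & g3 & g4).
  repeat split; simpl; apply derivable_pt_lim_plus; trivial.
Qed.

Lemma vderiv_scale (k : R -> R) (V : R -> vec4) (y a : R) (W : vec4) :
  derivable_pt_lim k y a -> vderiv V y W ->
  vderiv (fun z => vscale (k z) (V z)) y (vadd (vscale a (V y)) (vscale (k y) W)).
Proof.
  intros hk (h1 & h2 & h3 & h4).
  repeat split; simpl; apply derivable_pt_lim_mult; trivial.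
Qed.

Lemma vderiv_unique (f : R -> vec4) (y : R) (a b : vec4) :
  vderiv f y a -> vderiv f y b -> a = b.
Proof.
  intros (f1 & f2 & f3 & f4) (g1 & g2 & g3 & g4).
  apply vec4_ext; eapply uniqueness_limite; eauto.
Qed.

Lemma vderiv_frame_comb (E1 E2 E3 E4 : R -> vec4) (a b c d : R -> R) (y : R)
    (E1' E2' E3' E4' : vec4) (a' b' c' d' : R) :
  derivable_pt_lim a y a' -> derivable_pt_lim b y b' ->
  derivable_pt_lim c y c' -> derivable_pt_lim d y d' ->
  vderiv E1 y E1' -> vderiv E2 y E2' -> vderiv E3 y E3' -> vderiv E4 y E4' ->
  vderiv (fun z => frame_comb (E1 z) (E2 z) (E3 z) (E4 z) (a z) (b z) (c z) (d z)) y
    (vadd (frame_comb (E1 y) (E2 y) (E3 y) (E4 y) a' b' c' d')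
          (frame_comb E1' E2' E3' E4' (a y) (b y) (c y) (d y))).
Proof.
  intros da db dc dd dE1 dE2 dE3 dE4.
  eapply vderiv_ext; cycle 1.
  { unfold frame_comb.
    repeat apply vderiv_add; apply vderiv_scale; eassumption. }
  apply vec4_ext; unfold frame_comb; simpl; ring.
Qed.

Lemma vderiv_fixed_frame (p E1 E2 E3 E4 : vec4) (a b c d : R -> R) (y a' b' c' d' : R) :
  derivable_pt_lim a y a' -> derivable_pt_lim b y b' ->
  derivable_pt_lim c y c' -> derivable_pt_lim d y d' ->
  vderiv (fun z => vadd p (frame_comb E1 E2 E3 E4 (a z) (b z) (c z) (d z))) y
    (frame_comb E1 E2 E3 E4 a' b' c' d').
Proof.
  intros da db dc dd.
  eapply vderiv_ext; cycle 1.
  { apply vderiv_add; [apply vderiv_const|].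
    apply (vderiv_frame_comb (fun _ => E1) (fun _ => E2) (fun _ => E3) (fun _ => E4));
      first [eassumption | apply vderiv_const]. }
  apply vec4_ext; unfold frame_comb; simpl; ring.
Qed.

Lemma interval_nearby_point (L1 L2 s del : R) :
  L1 < L2 -> L1 <= s <= L2 -> 0 < del ->
  exists h, h <> 0 /\ Rabs h < del /\ L1 <= s + h <= L2.
Proof.
  intros HL Hs Hdel. destruct (Rlt_le_dec s L2) as [Hs2|Hs2].
  - set (h := Rmin (del / 2) (L2 - s)).
    assert (hpos : 0 < h) by (apply Rmin_glb_lt; lra).
    assert (h1 := Rmin_l (del / 2) (L2 - s)). assert (h2 := Rmin_r (del / 2) (L2 - s)).
    exists h. rewrite Rabs_right by lra. fold h in h1, h2. repeat split; lra.
  - set (h := Rmin (del / 2) (s - L1)).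
    assert (hpos : 0 < h) by (apply Rmin_glb_lt; lra).
    assert (h1 := Rmin_l (del / 2) (s - L1)). assert (h2 := Rmin_r (del / 2) (s - L1)).
    exists (- h). rewrite Rabs_Ropp, Rabs_right by lra. fold h in h1, h2. repeat split; lra.
Qed.

Lemma derivative_zero_on_interval (f : R -> R) (L1 L2 s l : R) :
  L1 < L2 -> L1 <= s <= L2 -> (forall y, L1 <= y <= L2 -> f y = 0) ->
  derivable_pt_lim f s l -> l = 0.
Proof.
  intros HL Hs Hf Hd. destruct (Req_dec l 0) as [|Hl]; trivial. exfalso.
  destruct (Hd (Rabs l) (Rabs_pos_lt _ Hl)) as [del Hdel].
  destruct (interval_nearby_point L1 L2 s del HL Hs (cond_pos del)) as (h & hne & hlt & hin).
  specialize (Hdel h hne hlt).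
  rewrite (Hf (s + h)), (Hf s) in Hdel by trivial.
  replace ((0 - 0) / h - l) with (- l) in Hdel by (field; trivial).
  rewrite Rabs_Ropp in Hdel. lra.
Qed.

Section Hypersurface.
Variables (r T N B1 B2 : R -> vec4) (k1 k2 k3 : R -> R) (L1 L2 : R)
  (u us ut uq v vs vt vq w ws wt wq x xs xt xq : R -> R -> R -> R).
Hypothesis HL : L1 < L2.
Hypothesis Hframe : frenet_frame r T N B1 B2 k1 k2 k3 L1 L2.
Hypotheses (Hu : C1_with u us ut uq) (Hv : C1_with v vs vt vq)
  (Hw : C1_with w ws wt wq) (Hx : C1_with x xs xt xq).

Let P := hyper r T N B1 B2 u v w x.

Lemma frame_orthonormal (s : R) :
  L1 <= s <= L2 -> orthonormal (T s) (N s) (B1 s) (B2 s).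
Proof.
  intros Hs. destruct (Hframe s Hs) as (_ & _ & _ & _ & _ & H).
  unfold orthonormal; tauto.
Qed.

Lemma hyper_eq_curve_iff (s t q : R) :
  L1 <= s <= L2 ->
  (P s t q = r s <-> u s t q = 0 /\ v s t q = 0 /\ w s t q = 0 /\ x s t q = 0).
Proof.
  intros Hs.
  change (P s t q) with
    (vadd (r s) (frame_comb (T s) (N s) (B1 s) (B2 s) (u s t q) (v s t q) (w s t q) (x s t q))).
  split.
  - intros E. apply (frame_comb_eq0 _ _ _ _ _ _ _ _ (frame_orthonormal s Hs)).
    exact (vadd_cancel_l _ _ E).
  - intros (-> & -> & -> & ->). apply vec4_ext; unfold frame_comb; simpl; ring.
Qed.

Section OnCurve.
Variables (t0 q0 : R).
Hypothesis Hzero : forall s, L1 <= s <= L2 ->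
  u s t0 q0 = 0 /\ v s t0 q0 = 0 /\ w s t0 q0 = 0 /\ x s t0 q0 = 0.

Let Pt (s : R) := frame_comb (T s) (N s) (B1 s) (B2 s)
  (ut s t0 q0) (vt s t0 q0) (wt s t0 q0) (xt s t0 q0).
Let Pq (s : R) := frame_comb (T s) (N s) (B1 s) (B2 s)
  (uq s t0 q0) (vq s t0 q0) (wq s t0 q0) (xq s t0 q0).

Lemma coeff_s_derivative_zero (f fs ft fq : R -> R -> R -> R) (s : R) :
  C1_with f fs ft fq -> L1 <= s <= L2 -> (forall s', L1 <= s' <= L2 -> f s' t0 q0 = 0) ->
  derivable_pt_lim (fun s' => f s' t0 q0) s 0.
Proof.
  intros [Hd _] Hs Hf. destruct (Hd s t0 q0) as [ds _].
  rewrite <- (derivative_zero_on_interval (fun s' => f s' t0 q0) L1 L2 s (fs s t0 q0));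
    trivial.
Qed.

Lemma partials_on_curve (s : R) (Ps Pt' Pq' : vec4) :
  L1 <= s <= L2 ->
  (partials P s t0 q0 Ps Pt' Pq' <-> Ps = T s /\ Pt' = Pt s /\ Pq' = Pq s).
Proof.
  intros Hs.
  assert (DS : vderiv (fun s' => P s' t0 q0) s (T s)).
  { destruct (Hframe s Hs) as (dr & dT & dN & dB1 & dB2 & _).
    destruct (Hzero s Hs) as (zu & zv & zw & zx).
    pose proof (coeff_s_derivative_zero u us ut uq s Hu Hs
                  (fun s' Hs' => proj1 (Hzero s' Hs'))) as dus.
    pose proof (coeff_s_derivative_zero v vs vt vq s Hv Hs
                  (fun s' Hs' => proj1 (proj2 (Hzero s' Hs')))) as dvs.
    pose proof (coeff_s_derivative_zero w ws wt wq s Hw Hs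
                  (fun s' Hs' => proj1 (proj2 (proj2 (Hzero s' Hs'))))) as dws.
    pose proof (coeff_s_derivative_zero x xs xt xq s Hx Hs
                  (fun s' Hs' => proj2 (proj2 (proj2 (Hzero s' Hs'))))) as dxs.
    eapply vderiv_ext; cycle 1.
    { apply vderiv_add; [exact dr|].
      apply (vderiv_frame_comb T N B1 B2 (fun s' => u s' t0 q0) (fun s' => v s' t0 q0)
               (fun s' => w s' t0 q0) (fun s' => x s' t0 q0)); eassumption. }
    simpl. rewrite zu, zv, zw, zx.
    apply vec4_ext; unfold frame_comb; simpl; ring. }
  destruct Hu as [Du _], Hv as [Dv _], Hw as [Dw _], Hx as [Dx _].
  destruct (Du s t0 q0) as (_ & dut & duq), (Dv s t0 q0) as (_ & dvt & dvq),
    (Dw s t0 q0) as (_ & dwt & dwq), (Dx s t0 q0) as (_ & dxt & dxq).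
  assert (DT : vderiv (fun t' => P s t' q0) t0 (Pt s))
    by (apply (vderiv_fixed_frame (r s) _ _ _ _ (fun t' => u s t' q0) (fun t' => v s t' q0)
          (fun t' => w s t' q0) (fun t' => x s t' q0)); trivial).
  assert (DQ : vderiv (fun q' => P s t0 q') q0 (Pq s))
    by (apply (vderiv_fixed_frame (r s) _ _ _ _ (fun q' => u s t0 q') (fun q' => v s t0 q')
          (fun q' => w s t0 q') (fun q' => x s t0 q')); trivial).
  split.
  - intros (hs & ht & hq).
    repeat split; eapply vderiv_unique; eassumption.
  - intros (-> & -> & ->). split; [|split]; assumption.
Qed.

Lemma isogeodesic_at_iff (s : R) :
  L1 <= s <= L2 ->
  (P s t0 q0 = r s /\ regular_at P s t0 q0 /\
   (exists n, normal_at P s t0 q0 n /\ parallel (N s) n))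
  <-> (vt s t0 q0 * xq s t0 q0 - vq s t0 q0 * xt s t0 q0 = 0 /\
       vt s t0 q0 * wq s t0 q0 - vq s t0 q0 * wt s t0 q0 = 0) /\
      wt s t0 q0 * xq s t0 q0 - wq s t0 q0 * xt s t0 q0 <> 0.
Proof.
  intros Hs.
  transitivity (lin_indep3 (T s) (Pt s) (Pq s) /\ parallel (N s) (cross4 (T s) (Pt s) (Pq s)));
    [| apply frame_geodesic_iff, frame_orthonormal, Hs].
  split.
  - intros (_ & (Ps & Pt' & Pq' & Hp & Hind) & (n & (Ps' & Pt'' & Pq'' & Hp' & ->) & Hpar)).
    apply partials_on_curve in Hp as (-> & -> & ->); trivial.
    apply partials_on_curve in Hp' as (-> & -> & ->); trivial.
    split; trivial.
  - intros [Hind Hpar]. split; [apply hyper_eq_curve_iff, Hzero; trivial|].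
    split.
    + exists (T s), (Pt s), (Pq s). split; trivial. apply partials_on_curve; auto.
    + exists (cross4 (T s) (Pt s) (Pq s)). split; trivial.
      exists (T s), (Pt s), (Pq s). split; trivial. apply partials_on_curve; auto.
Qed.
End OnCurve.
End Hypersurface.

Theorem mainTheorem1
  (r T N B1 B2 : R -> vec4) (k1 k2 k3 : R -> R) (L1 L2 T1 T2 Q1 Q2 : R)
  (u us ut uq v vs vt vq w ws wt wq x xs xt xq : R -> R -> R -> R)
  (t0 q0 : R)
  (HL : L1 < L2)
  (Hframe : frenet_frame r T N B1 B2 k1 k2 k3 L1 L2)
  (Hu : C1_with u us ut uq) (Hv : C1_with v vs vt vq)
  (Hw : C1_with w ws wt wq) (Hx : C1_with x xs xt xq)
  (Ht0 : T1 <= t0 <= T2) (Hq0 : Q1 <= q0 <= Q2) :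
  (isogeodesic (hyper r T N B1 B2 u v w x) r N L1 L2 t0 q0 <->
   (forall s, L1 <= s <= L2 ->
      (u s t0 q0 = 0 /\ v s t0 q0 = 0 /\ w s t0 q0 = 0 /\ x s t0 q0 = 0) /\
      (vt s t0 q0 * xq s t0 q0 - vq s t0 q0 * xt s t0 q0 = 0 /\
       vt s t0 q0 * wq s t0 q0 - vq s t0 q0 * wt s t0 q0 = 0) /\
      wt s t0 q0 * xq s t0 q0 - wq s t0 q0 * xt s t0 q0 <> 0)) /\
  (forall s, L1 <= s <= L2 ->
     (u s t0 q0 = 0 /\ v s t0 q0 = 0 /\ w s t0 q0 = 0 /\ x s t0 q0 = 0) ->
     wt s t0 q0 * xq s t0 q0 - wq s t0 q0 * xt s t0 q0 <> 0 ->
     ((vt s t0 q0 * xq s t0 q0 - vq s t0 q0 * xt s t0 q0 = 0 /\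
       vt s t0 q0 * wq s t0 q0 - vq s t0 q0 * wt s t0 q0 = 0) <->
      (vt s t0 q0 = 0 /\ vq s t0 q0 = 0))).
Proof.
  pose proof (isogeodesic_at_iff r T N B1 B2 k1 k2 k3 L1 L2
                u us ut uq v vs vt vq w ws wt wq x xs xt xq HL Hframe Hu Hv Hw Hx t0 q0)
    as Hpoint.
  split; [split|].
  - intros Hiso.
    assert (Hzero : forall s, L1 <= s <= L2 ->
              u s t0 q0 = 0 /\ v s t0 q0 = 0 /\ w s t0 q0 = 0 /\ x s t0 q0 = 0)
      by (intros s Hs; apply (hyper_eq_curve_iff r T N B1 B2 k1 k2 k3 L1 L2 u v w x Hframe);
          [trivial | apply (Hiso s Hs)]).
    intros s Hs. split; [auto|].
    apply (Hpoint Hzero s Hs), (Hiso s Hs).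
  - intros Hcond s Hs.
    apply (Hpoint (fun s' Hs' => proj1 (Hcond s' Hs')) s Hs), (Hcond s Hs).
  - intros s _ _ Hiii. apply minors_vanish_iff, Hiii.
Qed.
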